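(* In the binary setting with $R_p=\kappa(Q-d_h)$ and $0<\beta\le1$, the maximum of $U(s,\cdot)$ over $[0,Q-d_l]$ is attained at one of the endpoints: it is attained at $q_s=0$ if $$\lambda w(p)\big[(\kappa-\pi)(Q-d_l)\big]^\beta\ \ge\ w(1-p)\Big\{\big[(\pi-\kappa)Q+\kappa d_h-\pi d_l\big]^\beta-\big[\kappa(d_h-Q)\big]^\beta\Big\},$$ and at $q_s=Q-d_l$ otherwise.
   Context: Binary setting: $\kappa>0$, $0<d_l<Q<d_h$, $0<p<1$; the demand equals $d_h$ with probability $p$ and $d_l$ with probability $1-p$. $L(y)=0$ if $y\ge0$, $L(y)=\kappa y$ if $y<0$. Value function $v(x)=x^\beta$ for $x\ge0$, $v(x)=-\lambda(-x)^\beta$ for $x<0$, with $\lambda\ge1$. Weighting $w(q)=\exp(-(-\ln q)^\mu)$, $0<\mu\le1$. Price $\pi=\pi_b^{\max}\in(0,\kappa)$. Seller's utility $U(s,q_s)=w(1-p)\,v\big(\pi q_s+L(Q-q_s-d_l)-R_p\big)+w(p)\,v\big(\pi q_s+L(Q-q_s-d_h)-R_p\big)$ for $q_s\ge0$. *)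

From Stdlib Require Import Reals Lra.
Open Scope R_scope.

(* Real power x^b for x >= 0 (and b > 0): 0^b = 0, otherwise Rpower.
   (Stdlib's Rpower 0 b = exp (b * ln 0) is not 0, hence the case split.) *)
Definition rpow (x b : R) : R := if Rle_dec x 0 then 0 else Rpower x b.

Definition Lpen (kappa y : R) : R := if Rle_dec 0 y then 0 else kappa * y.

Definition vfun (beta lambda x : R) : R :=
  if Rle_dec 0 x then rpow x beta else - lambda * rpow (- x) beta.

Definition wfun (mu q : R) : R := exp (- Rpower (- ln q) mu).

Definition Useller (kappa Q dl dh p beta lambda mu pi Rp qs : R) : R :=
  wfun mu (1 - p) * vfun beta lambda (pi * qs + Lpen kappa (Q - qs - dl) - Rp)
  + wfun mu p * vfun beta lambda (pi * qs + Lpen kappa (Q - qs - dh) - Rp).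

From Stdlib Require Import Reals Lra Psatz.
Open Scope R_scope.

(* On [0, Q - dl] the seller never runs short in the low-demand state and
   always does in the high one, so with c := kappa (dh - Q) the utility is
   U(q) = w(1-p) (pi q + c)^beta - lambda w(p) ((kappa - pi) q)^beta.
   Put t := q / (Q - dl) and s := t^beta in [0, 1].  The loss term is exactly
   s times its value at Q - dl, while for beta <= 1 the gain increment
   (pi q + c)^beta - c^beta is at most s times the full increment
   (pi (Q - dl) + c)^beta - c^beta, because u |-> (1 + u)^beta - u^beta is
   nonincreasing.  Hence U(q) <= (1 - s) U(0) + s U(Q - dl), a convex
   combination of the endpoint values, and the condition of the theorem is
   exactly U(Q - dl) <= U(0). *)

Lemma Rpower_gt0 (x b : R) : 0 < Rpower x b.
Proof. apply exp_pos. Qed.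

Lemma Rpower_le_compat_nonpos (x y e : R) :
  0 < x -> x <= y -> e <= 0 -> Rpower y e <= Rpower x e.
Proof.
  intros Hx Hxy He; unfold Rpower.
  destruct (Rle_lt_or_eq_dec x y Hxy) as [Hlt | <-]; [|lra].
  pose proof (ln_increasing x y Hx Hlt).
  destruct (Rle_lt_or_eq_dec e 0 He) as [Hneg | ->].
  - apply Rlt_le, exp_increasing; nra.
  - rewrite !Rmult_0_l; lra.
Qed.

Lemma Rpower_le_1 (t b : R) : 0 < t <= 1 -> 0 <= b -> Rpower t b <= 1.
Proof.
  intros Ht Hb.
  replace 1 with (Rpower 1 b) by (unfold Rpower; rewrite ln_1, Rmult_0_r; apply exp_0).
  apply Rle_Rpower_l; lra.
Qed.

Lemma Rpower_succ_sub_antitone (b u v : R) :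
  0 < b <= 1 -> 0 < v -> v <= u ->
  Rpower (1 + u) b - Rpower u b <= Rpower (1 + v) b - Rpower v b.
Proof.
  intros Hb Hv Hvu.
  destruct (Rle_lt_or_eq_dec v u Hvu) as [Hlt | <-]; [|lra].
  set (f := fun x => Rpower (1 + x) b - Rpower x b).
  set (f' := fun x => b * Rpower (1 + x) (b - 1) * 1 - b * Rpower x (b - 1)).
  destruct (MVT_cor2 f f' v u Hlt) as [x [Hdiff Hx]].
  { intros x Hx; unfold f, f'; apply derivable_pt_lim_minus.
    - apply (derivable_pt_lim_comp (fun y => 1 + y) (fun y => Rpower y b)).
      + pose proof (derivable_pt_lim_plus (fct_cte 1) id x 0 1
          (derivable_pt_lim_const 1 x) (derivable_pt_lim_id x)) as Hd.
        rewrite Rplus_0_l in Hd; exact Hd.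
      + apply derivable_pt_lim_power; lra.
    - apply derivable_pt_lim_power; lra. }
  assert (f' x <= 0).
  { assert (Rpower (1 + x) (b - 1) <= Rpower x (b - 1))
      by (apply Rpower_le_compat_nonpos; lra).
    unfold f'; nra. }
  unfold f in Hdiff; nra.
Qed.

Lemma Rpower_shift_sub_le (b P c t : R) :
  0 < b <= 1 -> 0 < P -> 0 < c -> 0 < t <= 1 ->
  Rpower (t * P + c) b - Rpower c b <= Rpower t b * (Rpower (P + c) b - Rpower c b).
Proof.
  intros Hb HP Hc Ht.
  assert (HtP : 0 < t * P) by nra.
  assert (Hfactor : forall y, 0 < y ->
    Rpower (y + c) b - Rpower c b
    = Rpower y b * (Rpower (1 + c / y) b - Rpower (c / y) b)).
  { intros y Hy.
    assert (Hcy : 0 < c / y) by (apply Rdiv_lt_0_compat; lra).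
    rewrite Rmult_minus_distr_l, !Rpower_mult_distr by lra.
    f_equal; f_equal; field; lra. }
  rewrite (Hfactor _ HtP), (Hfactor _ HP), <- Rpower_mult_distr by lra.
  assert (Hmono : Rpower (1 + c / (t * P)) b - Rpower (c / (t * P)) b
                  <= Rpower (1 + c / P) b - Rpower (c / P) b).
  { apply Rpower_succ_sub_antitone; [lra | apply Rdiv_lt_0_compat; lra |].
    apply Rmult_le_compat_l; [lra|]; apply Rinv_le_contravar; nra. }
  pose proof (Rpower_gt0 t b); pose proof (Rpower_gt0 P b).
  rewrite Rmult_assoc; apply Rmult_le_compat_l; nra.
Qed.

Lemma rpow_gt0 (x b : R) : 0 < x -> rpow x b = Rpower x b.
Proof. intros Hx; unfold rpow; destruct (Rle_dec x 0); lra. Qed.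

Lemma rpow_0 (b : R) : rpow 0 b = 0.
Proof. unfold rpow; destruct (Rle_dec 0 0); lra. Qed.

Lemma vfun_ge0 (b l x : R) : 0 <= x -> vfun b l x = rpow x b.
Proof. intros Hx; unfold vfun; destruct (Rle_dec 0 x); lra. Qed.

Lemma vfun_le0 (b l x : R) : x <= 0 -> vfun b l x = - l * rpow (- x) b.
Proof.
  intros Hx; unfold vfun; destruct (Rle_dec 0 x); [|reflexivity].
  replace x with 0 by lra; rewrite Ropp_0, rpow_0; ring.
Qed.

Lemma Lpen_ge0 (k y : R) : 0 <= y -> Lpen k y = 0.
Proof. intros Hy; unfold Lpen; destruct (Rle_dec 0 y); lra. Qed.

Lemma Lpen_lt0 (k y : R) : y < 0 -> Lpen k y = k * y.
Proof. intros Hy; unfold Lpen; destruct (Rle_dec 0 y); lra. Qed.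

Lemma gain_loss_le_interpolation (b w l a g c M q : R) :
  0 < b <= 1 -> 0 <= w -> 0 <= l -> 0 < a -> 0 < g -> 0 < c -> 0 < M -> 0 <= q <= M ->
  let V x := w * rpow (a * x + c) b - l * rpow (g * x) b in
  exists s, 0 <= s <= 1 /\ V q <= (1 - s) * V 0 + s * V M.
Proof.
  intros Hb Hw Hl Ha Hg Hc HM Hq V.
  destruct (Rle_lt_or_eq_dec 0 q (proj1 Hq)) as [Hq0 | <-].
  2: { exists 0; split; lra. }
  set (t := q / M).
  assert (Ht : 0 < t <= 1).
  { unfold t; split; [apply Rdiv_lt_0_compat; lra|].
    apply (Rmult_le_reg_r M); [lra|]; unfold Rdiv; rewrite Rmult_assoc, Rinv_l; lra. }
  assert (Hqt : q = t * M) by (unfold t; field; lra).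
  exists (Rpower t b); split.
  { pose proof (Rpower_gt0 t b); pose proof (Rpower_le_1 t b Ht); lra. }
  unfold V; rewrite Hqt, !Rmult_0_r, Rplus_0_l, rpow_0, !rpow_gt0 by nra.
  replace (a * (t * M)) with (t * (a * M)) by ring.
  replace (g * (t * M)) with (t * (g * M)) by ring.
  rewrite <- (Rpower_mult_distr t (g * M)) by nra.
  pose proof (Rpower_shift_sub_le b (a * M) c t Hb ltac:(nra) Hc Ht) as Hgain.
  assert (w * (Rpower (t * (a * M) + c) b - Rpower c b)
          <= w * (Rpower t b * (Rpower (a * M + c) b - Rpower c b)))
    by (apply Rmult_le_compat_l; lra).
  nra.
Qed.

Lemma le_Rmax_of_convex_comb (x y z s : R) :
  0 <= s <= 1 -> x <= (1 - s) * y + s * z -> x <= Rmax y z.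
Proof.
  intros Hs Hx; pose proof (Rmax_l y z); pose proof (Rmax_r y z); nra.
Qed.

Lemma Useller_on_stock_range (kappa Q dl dh p beta lambda mu pi q : R) :
  0 <= kappa -> Q < dh -> 0 <= pi <= kappa -> 0 <= q <= Q - dl ->
  Useller kappa Q dl dh p beta lambda mu pi (kappa * (Q - dh)) q
  = wfun mu (1 - p) * rpow (pi * q + kappa * (dh - Q)) beta
    - lambda * wfun mu p * rpow ((kappa - pi) * q) beta.
Proof.
  intros Hk HQ Hpi Hq; unfold Useller.
  rewrite (Lpen_ge0 kappa (Q - q - dl)) by lra.
  rewrite (Lpen_lt0 kappa (Q - q - dh)) by lra.
  rewrite vfun_ge0 by nra; rewrite vfun_le0 by nra.
  replace (pi * q + 0 - kappa * (Q - dh)) with (pi * q + kappa * (dh - Q)) by ring.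
  replace (- (pi * q + kappa * (Q - q - dh) - kappa * (Q - dh)))
    with ((kappa - pi) * q) by ring.
  ring.
Qed.

Theorem mainTheorem6
  (kappa Q dl dh p beta lambda mu pi : R)
  (Hkappa : 0 < kappa) (Hdl : 0 < dl) (HdlQ : dl < Q) (HQdh : Q < dh)
  (Hp0 : 0 < p) (Hp1 : p < 1)
  (Hbeta0 : 0 < beta) (Hbeta1 : beta <= 1)
  (Hlambda : 1 <= lambda)
  (Hmu0 : 0 < mu) (Hmu1 : mu <= 1)
  (Hpi0 : 0 < pi) (Hpik : pi < kappa) :
  let Rp := kappa * (Q - dh) in
  let U := Useller kappa Q dl dh p beta lambda mu pi Rp in
  let cond :=
    lambda * wfun mu p * rpow ((kappa - pi) * (Q - dl)) beta >=
    wfun mu (1 - p) *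
      (rpow ((pi - kappa) * Q + kappa * dh - pi * dl) beta
       - rpow (kappa * (dh - Q)) beta) in
  (cond -> forall qs, 0 <= qs <= Q - dl -> U qs <= U 0) /\
  (~ cond -> forall qs, 0 <= qs <= Q - dl -> U qs <= U (Q - dl)).
Proof.
  intros Rp U cond.
  set (w1 := wfun mu (1 - p)); set (w2 := wfun mu p).
  assert (Hw1 : 0 < w1) by apply exp_pos.
  assert (Hw2 : 0 < w2) by apply exp_pos.
  assert (HU : forall q, 0 <= q <= Q - dl ->
    U q = w1 * rpow (pi * q + kappa * (dh - Q)) beta
          - lambda * w2 * rpow ((kappa - pi) * q) beta)
    by (intros q Hq; apply Useller_on_stock_range; lra).
  assert (Hbound : forall q, 0 <= q <= Q - dl -> U q <= Rmax (U 0) (U (Q - dl))).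
  { intros q Hq.
    assert (Hc : 0 < kappa * (dh - Q)) by nra.
    assert (Hlw2 : 0 <= lambda * w2) by nra.
    destruct (gain_loss_le_interpolation beta w1 (lambda * w2) pi (kappa - pi)
                (kappa * (dh - Q)) (Q - dl) q)
      as [s [Hs Hinterp]]; try lra.
    apply (le_Rmax_of_convex_comb _ _ _ s Hs).
    rewrite !HU by lra; exact Hinterp. }
  assert (Hcond : cond <-> U (Q - dl) <= U 0).
  { unfold cond; fold w1 w2; rewrite !HU by lra.
    replace ((pi - kappa) * Q + kappa * dh - pi * dl)
      with (pi * (Q - dl) + kappa * (dh - Q)) by ring.
    rewrite !Rmult_0_r, Rplus_0_l, rpow_0.
    split; intros; lra. }
  split; intros Hc qs Hqs; apply (Rle_trans _ _ _ (Hbound qs Hqs)).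
  - apply Rmax_lub; [lra | apply Hcond, Hc].
  - apply Rmax_lub; [| lra].
    apply Rlt_le, Rnot_le_lt; rewrite <- Hcond; exact Hc.
Qed.
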